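(* Let $T:X\to X$ be a continuous map on a Hausdorff topological space, $x\in X$ and $N\in\mathbb{N}$. The following are equivalent: (i) $x$ is periodic for $T$ with period strictly less than $N$ (i.e. $T^px=x$ for some $1\leq p<N$); (ii) for every neighbourhood $U$ of $x$ there is $n_U\in\mathbb{N}_0$ with $\#\big(N(x,U)\cap[n_U+1,n_U+N]\big)\geq2$; (iii) for every neighbourhood $U$ of $x$ there is $1\leq p<N$ with $T^p(U)\cap U\neq\varnothing$.
   Context: $N(x,U)=\{n\in\mathbb{N}_0:T^nx\in U\}$. *)

From HB Require Import structures.
From mathcomp Require Import all_boot all_order all_algebra.
From mathcomp Require Import all_classical all_reals all_analysis.
Set Implicit Arguments. Unset Strict Implicit. Unset Printing Implicit Defensive.
Local Open Scope classical_set_scope.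

Definition Nret (X : Type) (T : X -> X) (x : X) (U : set X) : set nat :=
  [set n : nat | U (iter n T x)].

From HB Require Import structures.
From mathcomp Require Import all_boot all_order all_algebra.
From mathcomp Require Import all_classical all_reals all_analysis.
From mathcomp Require Import zify.
Set Implicit Arguments. Unset Strict Implicit. Unset Printing Implicit Defensive.
Local Open Scope classical_set_scope.

(* The cycle (i) -> (ii) -> (iii) -> (i) is proved:
   - (i) -> (ii): the window [p, p + N - 1] contains the return times p, 2p;
   - (ii) -> (iii): two return times n < m in a window of length N give
     T^(m-n)(T^n x) = T^m x, a point of T^(m-n)(U) inside U, and m - n < N;
   - (iii) -> (i): if x has no period below N, Hausdorff separation and
     continuity of the iterates give, for each such p, a neighbourhood U_p of x
     disjoint from its T^p-image; their finite intersection violates (iii). *)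

Section Recurrence.
Context {X : topologicalType} (T : X -> X).

Definition periodic_before (x : X) (N : nat) : Prop :=
  exists p : nat, (1 <= p < N)%N /\ iter p T x = x.

Definition window_returns (x : X) (N : nat) : Prop :=
  forall U : set X, nbhs x U -> exists nU : nat,
    (2 <= count (fun n => n \in Nret T x U) (iota nU.+1 N))%N.

Definition nbhs_recurrent (x : X) (N : nat) : Prop :=
  forall U : set X, nbhs x U -> exists p : nat,
    (1 <= p < N)%N /\ (iter p T @` U) `&` U != set0.

End Recurrence.

Lemma count_ge2_of_two (A : eqType) (P : pred A) (s : seq A) (a b : A) :
  a != b -> a \in s -> b \in s -> P a -> P b -> (1 < count P s)%N.
Proof.
move=> neq_ab sa sb Pa Pb; rewrite -size_filter.
apply: (@uniq_leq_size _ [:: a; b]); first by rewrite /= inE neq_ab.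
by move=> c; rewrite !inE mem_filter => /orP [] /eqP ->; apply/andP.
Qed.

Lemma two_of_count_ge2 (A : eqType) (P : pred A) (s : seq A) :
  uniq s -> (1 < count P s)%N ->
  exists a b, [/\ a \in s, b \in s, P a, P b & a != b].
Proof.
move=> uniq_s; rewrite -size_filter.
have mem_fs := seq.mem_filter P ^~ s; have := seq.filter_uniq P uniq_s.
case: (seq.filter P s) mem_fs => [|a [|b r]] // mem_fs /andP [+ _] _.
rewrite inE negb_or => /andP [neq_ab _].
have /andP [Pa sa] : P a && (a \in s) by rewrite -mem_fs inE eqxx.
have /andP [Pb sb] : P b && (b \in s) by rewrite -mem_fs !inE eqxx orbT.
by exists a, b.
Qed.

Lemma continuous_iter (X : topologicalType) (T : X -> X) (n : nat) :
  continuous T -> continuous (iter n T).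
Proof.
move=> cT; elim: n => [|n IHn] y /=; first exact: cvg_id.
by apply: continuous_comp; [exact: IHn | exact: cT].
Qed.

Lemma moved_point_nbhs (X : topologicalType) (f : X -> X) (x : X) :
  hausdorff_space X -> continuous f -> f x <> x ->
  exists U, nbhs x U /\ (f @` U) `&` U = set0.
Proof.
move=> hX cf fx_neq; have : ~ cluster (nbhs x) (f x).
  by move=> /hX x_eq; exact: fx_neq (esym x_eq).
move=> /existsNP [A] /existsNP [B] /not_implyP [Ax] /not_implyP [Bfx] AB0.
exists (A `&` f @^-1` B); split; first exact: filterI Ax (cf x B Bfx).
apply/seteqP; split => // _ [[y [Ay By] <-]] [Afy _].
by apply: AB0; exists (f y).
Qed.

Lemma aperiodic_nbhs (X : topologicalType) (T : X -> X) (x : X) (M : nat) :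
  hausdorff_space X -> continuous T -> ~ periodic_before T x M ->
  exists U, nbhs x U /\
    forall p, (1 <= p < M)%N -> (iter p T @` U) `&` U = set0.
Proof.
move=> hX cT; elim: M => [|M IHM] aper.
  by exists setT; split; [exact: filterT | lia].
have [U [Ux U_sep]] : exists U, nbhs x U /\
    forall p, (1 <= p < M)%N -> (iter p T @` U) `&` U = set0.
  by apply: IHM => -[p [p_lt per]]; apply: aper; exists p; split => //; lia.
have [->|M_gt0] := posnP M; first by exists U; split => // p; lia.
have [V [Vx V_sep]] : exists V, nbhs x V /\ (iter M T @` V) `&` V = set0.
  apply: moved_point_nbhs => //; first exact: continuous_iter.
  by move=> per; apply: aper; exists M; split => //; lia.
exists (U `&` V); split; first exact: filterI.
move=> p p_lt; apply/seteqP; split => // _ [[y [Uy Vy] <-]] [Upy Vpy].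
have [p_ltM|p_geM] := ltnP p M.
  by rewrite -(U_sep p); [split=> //; exists y | lia].
have p_eq : p = M by lia.
by subst p; rewrite -V_sep; split=> //; exists y.
Qed.

Lemma returns_recurrence (X : Type) (T : X -> X) (x : X) (U : set X)
    (n m : nat) :
  (n <= m)%N -> U (iter n T x) -> U (iter m T x) ->
  (iter (m - n) T @` U) `&` U != set0.
Proof.
move=> le_nm Un Um; apply/set0P; exists (iter m T x); split => //.
by exists (iter n T x) => //; rewrite -iterD subnK.
Qed.

(* (i) -> (ii): for a period 1 <= p < N, the window [p, p + N - 1] contains
   the two return times p and 2p. *)
Lemma periodic_window_returns (X : topologicalType) (T : X -> X) (x : X)
    (N : nat) :
  periodic_before T x N -> window_returns T x N.
Proof.
move=> [p [p_lt per]] U Ux; exists p.-1; rewrite prednK; last by lia.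
have ret q : iter q T x = x -> q \in Nret T x U.
  by move=> per_q; rewrite in_setE /Nret /= per_q; exact: nbhs_singleton.
apply: (@count_ge2_of_two _ _ _ p (p + p)); rewrite ?mem_iota; try lia.
- exact: ret.
- by apply: ret; rewrite iterD !per.
Qed.

(* (ii) -> (iii): two distinct return times in a window of length N differ
   by some 1 <= p < N. *)
Lemma window_returns_recurrent (X : topologicalType) (T : X -> X) (x : X)
    (N : nat) :
  window_returns T x N -> nbhs_recurrent T x N.
Proof.
move=> wret U Ux; have [nU cnt] := wret U Ux.
have [n [m [n_in m_in Un Um neq_nm]]] := two_of_count_ge2 (iota_uniq _ _) cnt.
wlog lt_nm : n m n_in m_in Un Um neq_nm / (n < m)%N.
  move=> gen; have [lt_nm|lt_mn|eq_nm] := ltngtP n m.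
  - exact: (gen n m).
  - by apply: (gen m n) => //; rewrite eq_sym.
  - by move: neq_nm; rewrite eq_nm eqxx.
move: n_in m_in Un Um; rewrite !mem_iota !in_setE /Nret /= => n_in m_in Un Um.
exists (m - n)%N; split; first by lia.
exact: returns_recurrence (ltnW lt_nm) Un Um.
Qed.

Lemma recurrent_periodic (X : topologicalType) (T : X -> X) (x : X) (N : nat) :
  hausdorff_space X -> continuous T ->
  nbhs_recurrent T x N -> periodic_before T x N.
Proof.
move=> hX cT rec; apply: contrapT => aper.
have [U [Ux U_sep]] := aperiodic_nbhs hX cT aper.
have [p [p_lt]] := rec U Ux.
by rewrite U_sep ?eqxx.
Qed.

Theorem mainTheorem10 (X : topologicalType) (T : X -> X) (x : X) (N : nat)
  (hX : hausdorff_space X) (hT : continuous T) :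
  [/\ ((exists p : nat, (1 <= p < N)%N /\ iter p T x = x) <->
       (forall U : set X, nbhs x U -> exists nU : nat,
          (2 <= count (fun n => n \in Nret T x U) (iota nU.+1 N))%N)),
      ((forall U : set X, nbhs x U -> exists nU : nat,
          (2 <= count (fun n => n \in Nret T x U) (iota nU.+1 N))%N) <->
       (forall U : set X, nbhs x U -> exists p : nat,
          (1 <= p < N)%N /\ (iter p T @` U) `&` U != set0)) &
      ((exists p : nat, (1 <= p < N)%N /\ iter p T x = x) <->
       (forall U : set X, nbhs x U -> exists p : nat,
          (1 <= p < N)%N /\ (iter p T @` U) `&` U != set0))].
Proof.
have i_ii := @periodic_window_returns X T x N.
have ii_iii := @window_returns_recurrent X T x N.
have iii_i := @recurrent_periodic X T x N hX hT.
split; split.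
- by move/i_ii.
- by move/ii_iii/iii_i.
- by move/ii_iii.
- by move/iii_i/i_ii.
- by move/i_ii/ii_iii.
- by move/iii_i.
Qed.
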